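(* Let $\varphi:\mathbb{M}(n)\to\mathbb{C}$ be a positive unital linear functional, let $M>0$, and let $A\in\mathbb{M}(n)$ be Hermitian with $0\le A\le MI$. Then $$0\le\det\begin{pmatrix}\varphi(A)&\varphi(A^2)\\ \varphi(A^2)&\varphi(A^3)\end{pmatrix}\le\frac{M^4}{27}.$$
   Context: $\mathbb{M}(n)$ is the algebra of $n\times n$ complex matrices. A linear functional $\varphi$ on $\mathbb{M}(n)$ is positive if $\varphi(A)\ge0$ whenever $A$ is positive semidefinite, and unital if $\varphi(I)=1$. The order $0\le A\le MI$ is the Loewner order ($A$ and $MI-A$ positive semidefinite). *)

From HB Require Import structures.
From mathcomp Require Import all_boot all_order all_algebra.
Set Implicit Arguments. Unset Strict Implicit. Unset Printing Implicit Defensive.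
Import Order.TTheory GRing.Theory Num.Theory.
Local Open Scope ring_scope.

Definition adjmx (C : numClosedFieldType) m n (A : 'M[C]_(m, n)) : 'M[C]_(n, m) :=
  (map_mx Num.conj A)^T.

Definition psdmx (C : numClosedFieldType) n (A : 'M[C]_n) : Prop :=
  adjmx A = A /\ forall x : 'cV[C]_n, 0 <= (adjmx x *m A *m x) 0 0.

Definition loewner_le (C : numClosedFieldType) n (A B : 'M[C]_n) : Prop :=
  psdmx (B - A).

Definition linear_functional (C : numClosedFieldType) n (phi : 'M[C]_n -> C) : Prop :=
  forall (a : C) (A B : 'M[C]_n), phi (a *: A + B) = a * phi A + phi B.

Definition positive_functional (C : numClosedFieldType) n (phi : 'M[C]_n -> C) : Prop :=
  forall A : 'M[C]_n, psdmx A -> 0 <= phi A.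

Definition unital_functional (C : numClosedFieldType) n (phi : 'M[C]_n -> C) : Prop :=
  phi 1%:M = 1.

(* Put a := phi A, b := phi A^2, c := phi A^3.  For real al, be the matrices
   P A P and P (M - A) P with P := al + be A are positive semidefinite, so
   positivity of phi makes the binary quadratic forms with Gram matrices
   [[a, b], [b, c]] and [[M - a, M a - b], [M a - b, M b - c]] positive
   semidefinite on real arguments.  The first gives a c - b^2 >= 0, and the
   two together give M^4/27 - (a c - b^2) >= 0 by a sum-of-squares identity. *)

From HB Require Import structures.
From mathcomp Require Import all_boot all_order all_algebra ring.
Import Order.TTheory GRing.Theory Num.Theory.
Local Open Scope ring_scope.

Definition form2 {R : comNzRingType} (p q r al be : R) : R :=
  al ^+ 2 * p + 2%:R * al * be * q + be ^+ 2 * r.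

Definition psd_form2 {R : numDomainType} (p q r : R) : Prop :=
  forall al be : R, al \is Num.real -> be \is Num.real -> 0 <= form2 p q r al be.

Section BinaryForms.
Context {R : numFieldType} {p q r : R}.
Hypothesis pqr_psd : psd_form2 p q r.

Lemma psd_form2_ge0l : 0 <= p.
Proof.
have := pqr_psd 1 0 (real1 R) (real0 R).
by rewrite /form2 expr1n expr0n !(mulr0, mul0r, mulr1, mul1r, addr0).
Qed.

Lemma psd_form2_ge0r : 0 <= r.
Proof.
have := pqr_psd 0 1 (real0 R) (real1 R).
by rewrite /form2 expr1n expr0n !(mulr0, mul0r, mulr1, mul1r, add0r).
Qed.

Lemma psd_form2_real : q \is Num.real.
Proof.
have pqr_real := ger0_real (pqr_psd 1 1 (real1 R) (real1 R)).
have [p_real r_real] := (ger0_real psd_form2_ge0l, ger0_real psd_form2_ge0r).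
have -> : q = (form2 p q r 1 1 - p - r) / 2%:R by rewrite /form2; field.
by rewrite rpredM ?rpredV ?realn // rpredB ?rpredB.
Qed.

Lemma psd_form2_det_ge0 : 0 <= p * r - q * q.
Proof.
have [p_ge0 r_ge0 q_real] := And3 psd_form2_ge0l psd_form2_ge0r psd_form2_real.
have [pr0|pr_neq0] := eqVneq (p + r) 0.
  have /andP[/eqP p0 /eqP r0] : (p == 0) && (r == 0) by rewrite -paddr_eq0 ?pr0.
  rewrite (_ : _ - _ = form2 p q r 1 (- q) / 2%:R); last by rewrite /form2 p0 r0; field.
  by rewrite divr_ge0 ?ler0n ?pqr_psd ?real1 ?rpredN.
have pr_gt0 : 0 < p + r by rewrite lt_def pr_neq0 addr_ge0.
rewrite -(pmulr_rge0 _ pr_gt0) (_ : _ * _ = form2 p q r q (- p) + form2 p q r r (- q)).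
  by apply: addr_ge0; apply: pqr_psd; rewrite ?rpredN // ger0_real.
by rewrite /form2; ring.
Qed.

End BinaryForms.

Lemma psd_form2_shift_det_le (R : numFieldType) (M a b c : R) :
  0 < M -> psd_form2 a b c -> psd_form2 (M - a) (M * a - b) (M * b - c) ->
  a * c - b * b <= M ^+ 4 / 27%:R.
Proof.
move=> M_gt0 abc_psd shift_psd.
have a_ge0 := psd_form2_ge0l abc_psd.
have [a_real b_real] := (ger0_real a_ge0, psd_form2_real abc_psd).
have [c_real M_real] := (ger0_real (psd_form2_ge0r abc_psd), gtr0_real M_gt0).
set K := form2 (M - a) (M * a - b) (M * b - c) (- M) 3%:R.
set T := form2 a b c (- (5%:R * M)) 6%:R + 3%:R * M ^+ 2 * a.
have K_ge0 : 0 <= K by apply: shift_psd; rewrite ?realN ?realn.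
have T_ge0 : 0 <= T.
  apply: addr_ge0; first by apply: abc_psd; rewrite ?realN ?rpredM ?realn.
  by rewrite !mulr_ge0 ?ler0n ?exprn_ge0 ?(ltW M_gt0).
set S1 := 18%:R * c + 11%:R * M ^+ 2 * a - 30%:R * M * b.
set S2 := 6%:R * M * b - 5%:R * M ^+ 2 * a.
have S_real : (S1 \is Num.real) && (S2 \is Num.real).
  by rewrite /S1 /S2 !(rpredB, rpredD, rpredM, rpredX, realn, real1).
(* All of K, S1, S2 vanish at the moments of the extremal measure
   (delta_(M/3) + delta_M) / 2. *)
have -> : a * c - b * b =
    M ^+ 4 / 27%:R
    - (K * (4%:R * M ^+ 3 + T) + S1 ^+ 2 + 3%:R * S2 ^+ 2) / (108%:R * M ^+ 2).
  by rewrite /K /T /S1 /S2 /form2; field; rewrite gt_eqF.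
rewrite gerBl divr_ge0 ?mulr_ge0 ?ler0n ?exprn_ge0 ?(ltW M_gt0) //.
case/andP: S_real => S1_real S2_real.
apply: addr_ge0; first apply: addr_ge0.
- by rewrite mulr_ge0 // addr_ge0 // mulr_ge0 ?ler0n ?exprn_ge0 ?(ltW M_gt0).
- exact: real_exprn_even_ge0.
- by rewrite mulr_ge0 ?ler0n ?real_exprn_even_ge0.
Qed.

Definition pencil {C : numClosedFieldType} {n : nat} (A : 'M[C]_n) (al be : C) :
  'M[C]_n := al%:M + be *: A.

Section LinearFunctional.
Context {C : numClosedFieldType} {n : nat} {phi : 'M[C]_n -> C}.
Hypothesis phi_lin : linear_functional phi.

Lemma lfun0 : phi 0 = 0.
Proof. by have := phi_lin (-1) 0 0; rewrite scaler0 addr0 mulN1r addNr. Qed.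

Lemma lfunD X Y : phi (X + Y) = phi X + phi Y.
Proof. by rewrite -[X in phi (X + _)]scale1r phi_lin mul1r. Qed.

Lemma lfunZ a X : phi (a *: X) = a * phi X.
Proof. by rewrite -[a *: X]addr0 phi_lin lfun0 addr0. Qed.

Lemma lfunN X : phi (- X) = - phi X.
Proof. by rewrite -scaleN1r lfunZ mulN1r. Qed.

Lemma lfun_pencil (A B : 'M[C]_n) (al be : C) :
  phi (pencil A al be *m B *m pencil A al be) =
  al ^+ 2 * phi B + al * be * (phi (A *m B) + phi (B *m A)) + be ^+ 2 * phi (A *m B *m A).
Proof.
rewrite /pencil !(mulmxDl, mulmxDr) !(mul_scalar_mx, mul_mx_scalar).
rewrite -!(scalemxAl, scalemxAr) !scalerA !(lfunD, lfunZ) -!mulmxA; ring.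
Qed.

End LinearFunctional.

Lemma adjmxK (C : numClosedFieldType) m n (X : 'M[C]_(m, n)) : adjmx (adjmx X) = X.
Proof. by apply/matrixP=> i j; rewrite !mxE conjCK. Qed.

Lemma adjmxM (C : numClosedFieldType) m n p (X : 'M[C]_(m, n)) (Y : 'M[C]_(n, p)) :
  adjmx (X *m Y) = adjmx Y *m adjmx X.
Proof. by rewrite /adjmx map_mxM trmx_mul. Qed.

Lemma psdmx_congr (C : numClosedFieldType) n m (P : 'M[C]_n) (B : 'M[C]_(n, m)) :
  psdmx P -> psdmx (adjmx B *m P *m B).
Proof.
move=> [P_herm P_ge0]; split; first by rewrite !adjmxM adjmxK P_herm mulmxA.
by move=> x; have := P_ge0 (B *m x); rewrite adjmxM !mulmxA.
Qed.

Lemma adjmx_pencil (C : numClosedFieldType) n (A : 'M[C]_n) (al be : C) :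
  adjmx A = A -> al \is Num.real -> be \is Num.real ->
  adjmx (pencil A al be) = pencil A al be.
Proof.
move=> A_herm al_real be_real; apply/matrixP=> i j.
have A_ji : A i j = (A j i)^* by rewrite -{1}A_herm !mxE.
rewrite !mxE rmorphD rmorphMn rmorphM /= (conj_Creal al_real) (conj_Creal be_real).
by rewrite -A_ji eq_sym.
Qed.

Section PositiveFunctional.
Context {C : numClosedFieldType} {n : nat} {phi : 'M[C]_n -> C} {A : 'M[C]_n}.
Hypotheses (phi_lin : linear_functional phi) (phi_pos : positive_functional phi).
Hypothesis A_herm : adjmx A = A.

Lemma lfun_pencil_ge0 (B : 'M[C]_n) (al be : C) :
  psdmx B -> al \is Num.real -> be \is Num.real ->
  0 <= phi (pencil A al be *m B *m pencil A al be).
Proof.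
move=> B_psd al_real be_real; apply: phi_pos.
by rewrite -{1}adjmx_pencil //; apply: psdmx_congr.
Qed.

Lemma psd_form2_moments :
  psdmx A -> psd_form2 (phi A) (phi (A *m A)) (phi (A *m A *m A)).
Proof.
move=> A_psd al be al_real be_real.
suff -> : form2 (phi A) (phi (A *m A)) (phi (A *m A *m A)) al be =
          phi (pencil A al be *m A *m pencil A al be) by exact: lfun_pencil_ge0.
by rewrite lfun_pencil // /form2; ring.
Qed.

Lemma psd_form2_shifted_moments (M : C) :
  unital_functional phi -> psdmx (M%:M - A) ->
  psd_form2 (M - phi A) (M * phi A - phi (A *m A))
            (M * phi (A *m A) - phi (A *m A *m A)).
Proof.
move=> phi1 MA_psd al be al_real be_real.
suff -> : form2 (M - phi A) (M * phi A - phi (A *m A))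
                (M * phi (A *m A) - phi (A *m A *m A)) al be =
          phi (pencil A al be *m (M%:M - A) *m pencil A al be) by exact: lfun_pencil_ge0.
rewrite lfun_pencil // !(mulmxBl, mulmxBr, mul_scalar_mx, mul_mx_scalar) -scalemxAl.
by rewrite -scalemx1 !(lfunD, lfunN, lfunZ) // phi1 /form2; ring.
Qed.

End PositiveFunctional.

Lemma det_matrix22 (R : comNzRingType) (f : nat -> nat -> R) :
  \det (\matrix_(i < 2, j < 2) f i j) = f 0 0 * f 1 1 - f 0 1 * f 1 0.
Proof.
rewrite (expand_det_row _ ord0) !big_ord_recl big_ord0 /cofactor !mxE /=.
by rewrite !det_mx11 !mxE /bump /=; ring.
Qed.

Theorem theorem3p2 (C : numClosedFieldType) (n : nat) (phi : 'M[C]_n -> C)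
  (M : C) (A : 'M[C]_n) :
  linear_functional phi -> positive_functional phi -> unital_functional phi ->
  0 < M ->
  adjmx A = A -> loewner_le 0 A -> loewner_le A (M%:M) ->
  0 <= \det (\matrix_(i < 2, j < 2) phi (A ^+ (i + j).+1)) /\
  \det (\matrix_(i < 2, j < 2) phi (A ^+ (i + j).+1)) <= M ^+ 4 / 27%:R.
Proof.
move=> phi_lin phi_pos phi1 M_gt0 A_herm A_ge0 A_le_M.
rewrite /loewner_le subr0 in A_ge0.
rewrite (@det_matrix22 _ (fun i j => phi (A ^+ (i + j).+1))) /=.
rewrite expr1 (exprS A 2) expr2 -!mulmxE mulmxA.
have moments_psd := psd_form2_moments phi_lin phi_pos A_herm A_ge0.
have shifted_psd := psd_form2_shifted_moments phi_lin phi_pos A_herm M phi1 A_le_M.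
split; first exact: psd_form2_det_ge0.
exact: psd_form2_shift_det_le.
Qed.
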